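(* For each integer $k\ge1$, the monoid $M_k$ is isomorphic to $I_k$.
   Context: Construction $\mu$: let $M$ be a monoid, $f\colon M\to M$ an endomorphism, and $t\in M$ such that $st=tf(s)$ for all $s\in M$. Then $\mu(M,t,f)=(N,\tau,\phi)$ where $N$ is the disjoint union of $M$ and $\{\tau s : s\in M\}$ ($\tau$ a new symbol, $\tau s$ denoting the pair $(\tau,s)$); writing $\tau^0s=s$ and $\tau^1 s=\tau s$, define $\phi\colon N\to M\subseteq N$ by $\phi(\tau^e s)=t^ef(s)$ and multiplication by $(\tau^{e_1}s_1)(\tau^{e_2}s_2)=\tau^{e_1}(s_1s_2)$ if $e_2=0$ and $=\tau(\phi(\tau^{e_1}s_1)s_2)$ if $e_2=1$; $\tau$ denotes $\tau 1_M$. Then $N$ is a monoid, $\phi$ an endomorphism of $N$, and $\sigma\tau=\tau\phi(\sigma)$ for all $\sigma\in N$. Recursively: $M_1$ is the one-element monoid, $t_1$ its unique element, $f_1$ its unique endomorphism; $(M_{k+1},t_{k+1},f_{k+1})=\mu(M_k,t_k,f_k)$. $I_k$ is the monoid under composition of all $g\colon\{0,\dots,k-1\}\to\{0,\dots,k-1\}$ with $g(0)=0$ and $g(i-1)\le g(i)\le g(i-1)+1$ for $0<i<k$. *)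

From mathcomp Require Import all_boot.
Set Implicit Arguments. Unset Strict Implicit. Unset Printing Implicit Defensive.

Record tmon := TMon {
  car : Type;
  tmul : car -> car -> car;
  tone : car;
  tf : car -> car;
  tT : car }.

(* Construction mu.  N = M ⊔ {tau s}; an element tau^e s is encoded as the
   pair (e, s) with e : bool (false = exponent 0, true = exponent 1). *)
Definition mu_phi (A : tmon) (x : bool * car A) : car A :=
  if x.1 then @tmul A (@tT A) (@tf A x.2) else @tf A x.2.

Definition mu_mul (A : tmon) (x y : bool * car A) : bool * car A :=
  if y.1 then (true, @tmul A (mu_phi x) y.2) else (x.1, @tmul A x.2 y.2).

Definition mu (A : tmon) : tmon :=
  @TMon (bool * car A) (@mu_mul A) (false, @tone A)
        (fun x => (false, mu_phi x)) (true, @tone A).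

Definition M1 : tmon := @TMon unit (fun _ _ => tt) tt (fun _ => tt) tt.

Definition Mk (k : nat) : tmon := iter k.-1 mu M1.

Definition in_I (k : nat) (g : {ffun 'I_k -> 'I_k}) : bool :=
  [forall i : 'I_k, (i == 0 :> nat) ==> (g i == 0 :> nat)] &&
  [forall i : 'I_k, forall j : 'I_k,
     (j.+1 == i :> nat) ==> ((g j <= g i) && (g i <= (g j).+1))].

Definition fcomp (k : nat) (g h : {ffun 'I_k -> 'I_k}) : {ffun 'I_k -> 'I_k} :=
  [ffun i => g (h i)].

Definition fid (k : nat) : {ffun 'I_k -> 'I_k} := [ffun i => i].

Definition monoid_iso_I (A : tmon) (k : nat) (h : car A -> {ffun 'I_k -> 'I_k}) : Prop :=
  [/\ forall x, in_I (h x),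
      injective h,
      forall g, in_I g -> exists x, h x = g,
      h (@tone A) = fid k
    & forall x y, h (@tmul A x y) = fcomp (h x) (h y)].

From mathcomp Require Import all_boot zify.

Set Implicit Arguments.
Unset Strict Implicit.
Unset Printing Implicit Defensive.

(* An element of M_(n+1) = mu^n(M_1) acts on {0, ..., n} by a staircase map:
   M_1 acts as the identity, and tau^e s sends 0 to 0 and i+1 to s(i) + 1 - e.
   Under this action f becomes the shift g |-> (0, g 0 + 1, g 1 + 1, ...), t the
   predecessor map, and mu_phi the restriction from {0, ..., n+1} to {0, ..., n};
   together these make the action multiplicative, by induction on n.  Conversely
   a staircase map g is the action of tau^e s with e = (g 1 == 0) and s acting as
   i |-> g (i+1) - g 1, so the action is a bijection onto I_(n+1). *)

Definition shift (g : nat -> nat) (i : nat) : nat :=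
  if i is j.+1 then (g j).+1 else 0.

Definition staircase (n : nat) (g : nat -> nat) : Prop :=
  g 0 = 0 /\ forall i, i < n -> g i <= g i.+1 <= (g i).+1.

Lemma staircase_le n g i : staircase n g -> i <= n -> g i <= i.
Proof.
case=> g0 gS; elim: i => [|i IHi] lein; first by rewrite g0.
by have := gS i lein; have := IHi (ltnW lein); lia.
Qed.

Fixpoint act (n : nat) : car (iter n mu M1) -> nat -> nat :=
  match n return car (iter n mu M1) -> nat -> nat with
  | 0 => fun _ i => i
  | n.+1 => fun (x : bool * car (iter n mu M1)) i =>
      if i is j.+1 then @act n x.2 j + ~~ x.1 else 0
  end.
Arguments act : clear implicits.

Lemma act0 n x : act n x 0 = 0.
Proof. by case: n x. Qed.

Lemma act_succ n x i : act n x i <= act n x i.+1 <= (act n x i).+1.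
Proof.
elim: n x i => [|n IHn] x i /=; first by rewrite leqnSn leqnn.
case: x => e s; case: i => [|j] /=; first by rewrite act0; case: e.
by have := IHn s j; lia.
Qed.

Lemma act_staircase n x : staircase n (act n x).
Proof. by split=> [|i _]; [exact: act0 | exact: act_succ]. Qed.

Lemma act_le n x i : i <= n -> act n x i <= i.
Proof. exact/staircase_le/act_staircase. Qed.

Lemma act_bound n x i : i <= n -> act n x i <= n.
Proof. by move=> lein; rewrite (leq_trans (act_le x lein)). Qed.

Lemma act_one n i : i <= n -> act n (@tone _) i = i.
Proof. by elim: n i => [|n IHn] [|i] //= lein; rewrite IHn // addn1. Qed.

Lemma act_t n i : i <= n -> act n (@tT _) i = i.-1.
Proof. by case: n i => [|n] [|i] //= lein; rewrite act_one // addn0. Qed.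

Section ActStep.

Variable n : nat.
Local Notation A := (iter n mu M1).

Hypothesis act_mul :
  forall x y i, i <= n -> act n (tmul x y) i = act n x (act n y i).
Hypothesis act_f : forall x i, i <= n -> act n (tf x) i = shift (act n x) i.

Lemma act_mu_phi (x : car (mu A)) i :
  i <= n -> act n (mu_phi x) i = act n.+1 x i.
Proof.
case: x => [[|] s] lein /=; rewrite /mu_phi /=; last first.
  by rewrite act_f //; case: i lein => //= i _; rewrite addn1.
rewrite act_mul // act_f // act_t; last first.
  by case: i lein => //= i lein; have := act_le s (ltnW lein); lia.
by case: i lein => //= i _; rewrite addn0.
Qed.

Lemma act_mu_mul (x y : car (mu A)) i :
  i <= n.+1 -> act n.+1 (tmul x y) i = act n.+1 x (act n.+1 y i).
Proof.
case: x y i => [e1 s1] [[|] s2] [|i] lein //=; rewrite /mu_mul /=.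
  by rewrite !addn0 act_mul // act_mu_phi // act_bound.
by rewrite addn1 act_mul.
Qed.

Lemma act_mu_f (x : car (mu A)) i :
  i <= n.+1 -> act n.+1 (tf x) i = shift (act n.+1 x) i.
Proof. by case: i => [|i] lein //=; rewrite addn1 act_mu_phi. Qed.

End ActStep.

Lemma act_morph n :
  (forall x y i, i <= n -> act n (tmul x y) i = act n x (act n y i)) /\
  (forall x i, i <= n -> act n (tf x) i = shift (act n x) i).
Proof.
elim: n => [|n [act_mul act_f]]; first by split=> [x y|x] [|i].
by split=> [x y i|x i]; [apply: act_mu_mul | apply: act_mu_f].
Qed.

Lemma act_mul n x y i : i <= n -> act n (tmul x y) i = act n x (act n y i).
Proof. exact: (proj1 (act_morph n)). Qed.

Lemma act_inj n x y : (forall i, i <= n -> act n x i = act n y i) -> x = y.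
Proof.
elim: n x y => [|n IHn]; first by do 2!case.
move=> [e1 s1] [e2 s2] eq_xy.
have /= := eq_xy 1 isT; rewrite !act0 => eq_e.
have <- : e1 = e2 by move: eq_e; case: (e1); case: (e2).
congr pair; apply: IHn => i lein.
by have /= := eq_xy i.+1 lein; lia.
Qed.

Lemma act_onto n g :
  staircase n g -> exists x, forall i, i <= n -> act n x i = g i.
Proof.
elim: n g => [|n IHn] g [g0 gS]; first by exists tt => -[|i].
have g1_le : forall i, i <= n -> g 1 <= g i.+1.
  by elim=> [|i IHi] lein //; have := gS i.+1 lein; have := IHi (ltnW lein); lia.
have g1_01 : g 1 <= 1 by have := gS 0 isT; lia.
have [|s act_s] := IHn (fun j => g j.+1 - g 1).
  split=> [|i lein]; first exact: subnn.
  by have := gS i.+1 lein; have := g1_le i (ltnW lein); lia.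
exists (g 1 == 0, s) => -[|i] lein //=.
by rewrite act_s //; have := g1_le i lein; case: eqP => /=; lia.
Qed.

Section StaircaseFfun.

Variable n : nat.

Definition ffun_of (g : nat -> nat) : {ffun 'I_n.+1 -> 'I_n.+1} :=
  [ffun i : 'I_n.+1 => inord (g i)].

Definition nat_of_ffun (g : {ffun 'I_n.+1 -> 'I_n.+1}) (i : nat) : nat :=
  g (inord i).

Lemma ffun_ofK g i :
  {homo g : j / j <= n} -> i <= n -> nat_of_ffun (ffun_of g) i = g i.
Proof. by move=> g_le lein; rewrite /nat_of_ffun ffunE !inordK // ltnS g_le. Qed.

Lemma nat_of_ffunK g : ffun_of (nat_of_ffun g) = g.
Proof. by apply/ffunP => i; rewrite ffunE /nat_of_ffun !inord_val. Qed.

Lemma eq_ffun_of {g h} :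
  (forall i, i <= n -> g i = h i) -> ffun_of g = ffun_of h.
Proof. by move=> eq_gh; apply/ffunP => i; rewrite !ffunE eq_gh // -ltnS. Qed.

Lemma ffun_of_id : ffun_of id = fid n.+1.
Proof. by apply/ffunP => i; rewrite !ffunE inord_val. Qed.

Lemma ffun_of_comp g h :
  {homo h : i / i <= n} ->
  ffun_of (fun i => g (h i)) = fcomp (ffun_of g) (ffun_of h).
Proof.
move=> h_le; apply/ffunP => i.
by rewrite !ffunE inordK // ltnS h_le // -ltnS.
Qed.

Lemma in_I_ffun_of g : staircase n g -> in_I (ffun_of g).
Proof.
move=> g_st; have g_le (i : 'I_n.+1) : g i < n.+1.
  by rewrite ltnS (leq_trans (staircase_le g_st _)) // -ltnS.
case: g_st => g0 gS; apply/andP; split.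
  by apply/forallP => i; apply/implyP => /eqP i0; rewrite ffunE inordK // i0 g0.
apply/forallP => i; apply/forallP => j; apply/implyP => /eqP ji.
by rewrite !ffunE !inordK // -ji gS // ji -ltnS.
Qed.

Lemma staircase_nat_of_ffun g : in_I g -> staircase n (nat_of_ffun g).
Proof.
case/andP => /forallP g0 /forallP gS; split.
  by apply/eqP; have /implyP := g0 (inord 0); rewrite inordK // eqxx; apply.
move=> i ltin; have /forallP/(_ (inord i))/implyP := gS (inord i.+1).
by rewrite /nat_of_ffun !inordK ?ltnS ?(ltnW ltin) // eqxx => /(_ isT).
Qed.

End StaircaseFfun.

Theorem proposition4p10 (k : nat) (hk : 1 <= k) :
  exists h : car (Mk k) -> {ffun 'I_k -> 'I_k}, monoid_iso_I h.
Proof.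
case: k hk => // n _; rewrite /Mk /=.
exists (fun x => ffun_of n (act n x)); split.
- by move=> x; apply/in_I_ffun_of/act_staircase.
- move=> x y eq_xy; apply: act_inj => i lein.
  by rewrite -(ffun_ofK (act_bound x) lein) eq_xy (ffun_ofK (act_bound y) lein).
- move=> g /staircase_nat_of_ffun /act_onto [x act_x].
  by exists x; rewrite (eq_ffun_of act_x) nat_of_ffunK.
- by rewrite (eq_ffun_of (@act_one n)) ffun_of_id.
- move=> x y; rewrite (eq_ffun_of (act_mul x y)).
  exact/ffun_of_comp/act_bound.
Qed.
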